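(* For nonnegative integers $p,q$, $G_2(p,q)=\binom{p+q+1}{q}\zeta(p+q+2)$, and if moreover $q\ge1$, then also $G_2(p,q)=G_2(q-1,p+1)$.
   Context: $\zeta(s)$ is the Riemann zeta function. For nonnegative integers $n,p,q$, $$G_{n+2}(p,q)=\sum_{1\le k_1<\cdots<k_{p+1}}\frac{1}{k_1\cdots k_p\,k_{p+1}^{n+2}}\sum_{1\le \ell_1\le\cdots\le\ell_q\le k_{p+1}}\frac{1}{\ell_1\cdots\ell_q}.$$ *)

From HB Require Import structures.
From mathcomp Require Import all_boot all_order all_algebra.
From mathcomp Require Import all_classical all_reals all_analysis.
Set Implicit Arguments. Unset Strict Implicit. Unset Printing Implicit Defensive.
Import Order.TTheory GRing.Theory Num.Theory.
Import numFieldNormedType.Exports.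
Local Open Scope ring_scope.

(* Estr p m = sum over 1 <= k_1 < ... < k_p <= m of 1/(k_1 ... k_p)
   (nested sum unfolded on the largest index k_p = j). *)
Fixpoint Estr (R : realType) (p m : nat) : R :=
  match p with
  | 0 => 1
  | p'.+1 => \sum_(1 <= j < m.+1) Estr R p' j.-1 / j%:R
  end.

(* Hweak q m = sum over 1 <= l_1 <= ... <= l_q <= m of 1/(l_1 ... l_q)
   (nested sum unfolded on the largest index l_q = l). *)
Fixpoint Hweak (R : realType) (q m : nat) : R :=
  match q with
  | 0 => 1
  | q'.+1 => \sum_(1 <= l < m.+1) Hweak R q' l / l%:R
  end.

(* term of G_{n+2}(p,q) with outer index k = k_{p+1} >= 1 *)
Definition Gterm (R : realType) (n p q k : nat) : R :=
  Estr R p k.-1 * Hweak R q k / (k%:R ^+ (n + 2)).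

Definition Gpartial (R : realType) (n p q N : nat) : R :=
  \sum_(1 <= k < N) Gterm R n p q k.

Definition G (R : realType) (n p q : nat) : R := limn (Gpartial R n p q).

Definition zeta (R : realType) (s : nat) : R :=
  limn (fun N => \sum_(1 <= k < N) 1 / ((k%:R : R) ^+ s)).

(* Work in R[y]/(y^(q+1)) and put P_m^k = prod_(j<k) 1/(m+j-y). The coefficient of y^s
   in k! P_1^k is the weak harmonic sum H_s(k); the partial fraction identity
   P_m^k - P_(m+1)^k = k P_m^(k+1) telescopes in m; and (m-y)^(-p-2) expands as
   sum_(j<K) E_p(j) j! P_m^(j+2) plus an explicit remainder. Taking coefficients of y^q,
   the nonnegative array U(m,j) = E_p(j) j! [y^q] P_(m+1)^(j+2) has row sums (over m) equal
   to the terms E_p(j) H_q(j+1)/(j+1)^2 of G_2(p,q) and column sums (over j)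
   C(p+q+1,q)/(m+1)^(p+q+2), so Tonelli gives G_2(p,q) = C(p+q+1,q) zeta(p+q+2), and the
   symmetry is C(n,q) = C(n,p+1) for n = p+q+2. The row remainders are O(1/M); the column
   remainders are at most F(K)/(K+1) with F nondecreasing and sum_K F(K)/(K+1)^2 bounded
   by finitely many G_2(a,s), a <= p, s <= q, which converge by the inequality half of the
   same argument; hence F(K)/(K+1) -> 0. *)

From HB Require Import structures.
From mathcomp Require Import all_boot all_order all_algebra.
From mathcomp Require Import all_classical all_reals all_analysis.
From mathcomp Require Import ring zify.
Import Order.TTheory GRing.Theory Num.Theory.
Import numFieldNormedType.Exports.
Local Open Scope classical_set_scope.
Local Open Scope ring_scope.

Section SeriesFacts.
Context {R : realType}.
Implicit Types (u F : R ^nat).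

Lemma sum1_series u n : \sum_(1 <= k < n.+1) u k = series (fun k => u k.+1) n.
Proof. by rewrite big_add1 /= seriesEnat. Qed.

Lemma nneseries_EFin u : cvgn (series u) -> (\sum_(k <oo) (u k)%:E = (limn (series u))%:E)%E.
Proof.
by move=> cu; rewrite -EFin_lim //; apply/congr_lim/funext => n /=; rewrite sumEFin.
Qed.

Lemma cvg_sum1 u : cvgn (series (fun k => u k.+1)) ->
  \sum_(1 <= k < n) u k @[n --> \oo] --> limn (series (fun k => u k.+1)).
Proof. by move=> cu; rewrite -cvg_shiftS; under eq_fun do rewrite sum1_series. Qed.

Lemma is_cvg_series_sum I (r : seq I) (P : pred I) (f : I -> R ^nat) :
  (forall i, P i -> cvgn (series (f i))) ->
  cvgn (series (fun k => \sum_(i <- r | P i) f i k)).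
Proof.
move=> cf; have cv0 : cvgn (series (0 : R ^nat)).
  rewrite (_ : series _ = cst 0); first exact: is_cvg_cst.
  by apply/funext => n; rewrite seriesEnat /= big1_eq.
elim: r => [|i r IHr]; first by under eq_fun do rewrite big_nil.
rewrite (_ : (fun k => _) = (if P i then f i else 0) + (fun k => \sum_(j <- r | P j) f j k)).
  by apply: is_cvg_seriesD => //; case: ifP => // /cf.
by apply/funext => k; rewrite big_cons; case: (P i); rewrite ?add0r.
Qed.

Lemma is_cvg_series_inv_pow w : (2 <= w)%N -> cvgn (series (fun i => 1 / i.+1%:R ^+ w : R)).
Proof.
move=> w2; pose v := telescope (fun n => - (2 * harmonic n) : R).
have vE n : v n = 2 / (n.+1%:R * n.+2%:R).
  rewrite /v /telescope /harmonic /=; field.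
  by rewrite -[2]/(2%:R) -[1]/(1%:R) -!natrD !pnatr_eq0.
apply: (series_le_cvg (v_ := v)) => [n | n | n |].
- by rewrite div1r invr_ge0 exprn_ge0.
- by rewrite vE divr_ge0.
- rewrite vE; set x : R := n.+1%:R; have x1 : 1 <= x by rewrite ler1n.
  have x0 : 0 < x := lt_le_trans ltr01 x1.
  have -> : (n.+2%:R : R) = x + 1 by rewrite /x -natr1.
  clearbody x.
  apply: (@le_trans _ _ (1 / x ^+ 2)).
    by rewrite !div1r lef_pV2 ?posrE ?exprn_gt0 //; exact: ler_weXn2l.
  have -> : 2 / (x * (x + 1)) = 1 / x ^+ 2 + (x - 1) / (x ^+ 2 * (x + 1)).
    by field; rewrite !gt_eqF ?addr_gt0.
  by rewrite lerDl divr_ge0 ?subr_ge0 // mulr_ge0 ?exprn_ge0 ?addr_ge0 ?ltW.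
rewrite /v telescopeK; apply: is_cvgB; last exact: is_cvg_cst.
apply: is_cvgN; apply: is_cvgMr; apply/cvg_ex; exists 0; exact: cvg_harmonic.
Qed.

Lemma cvg_div_of_summable_div_sqr F : nondecreasing_seq F -> (forall k, 0 <= F k) ->
  cvgn (series (fun k => F k / k.+1%:R ^+ 2)) -> F k / k.+1%:R @[k --> \oo] --> 0.
Proof.
move=> F_nd F0; set a := fun k => _; set S := series a => cvS.
have a0 k : 0 <= a k by rewrite divr_ge0 ?exprn_ge0.
have S_nd : nondecreasing_seq S by apply: nondecreasing_series => k _ _; exact: a0.
have block K : F K / K.+1%:R <= 4 * (S (K.+1 + K)%N - S K).
  rewrite /S series_addn addrAC subrr add0r.
  have aK k : (K <= k < K.+1 + K)%N -> F K / (2 * K.+1%:R) ^+ 2 <= a k.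
    move=> /andP[Kk kK]; apply: ler_pM; rewrite ?invr_ge0 ?exprn_ge0 ?F_nd //.
    rewrite lef_pV2 ?posrE ?exprn_gt0 ?mulr_gt0 // lerXn2r ?nnegrE ?mulr_ge0 //.
    by rewrite -natrM ler_nat; lia.
  have -> : F K / K.+1%:R = 4 * \sum_(K <= k < K.+1 + K) F K / (2 * K.+1%:R) ^+ 2.
    rewrite sumr_const_nat addnK -mulr_natr.
    by field; rewrite -[1]/(1%:R) -natrD pnatr_eq0.
  rewrite ler_wpM2l // big_nat_cond [leRHS]big_nat_cond.
  by apply: ler_sum => k /andP[/aK + _].
apply: (@squeeze_cvgr _ _ _ _ (cst 0) (fun K => 4 * (limn S - S K))).
- apply: nearW => K; rewrite divr_ge0 //= (le_trans (block K)) //.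
  by rewrite ler_wpM2l // lerD2r nondecreasing_cvgn_le.
- exact: cvg_cst.
rewrite -[X in _ --> X](mulr0 4) -(subrr (limn S)).
by apply: cvgMr; apply: cvgB; [exact: cvg_cst | exact: cvS].
Qed.
End SeriesFacts.

Section TruncatedSeries.
Context {R : numFieldType} {N : nat}.

Definition tseries := {poly %/ ('X^(N.+1) : {poly R})}.
Definition tcoef (i : nat) (a : tseries) : R := (a : {poly R})`_i.
Definition tsC (r : R) : tseries := qpolyC _ r.
Definition tsX : tseries := 'qX.

Implicit Types (a b : tseries) (r x : R).

Lemma mk_monic_tseries : mk_monic ('X^(N.+1) : {poly R}) = 'X^(N.+1).
Proof. exact: mk_monic_Xn. Qed.

Lemma tcoef_in_qpoly i (p : {poly R}) : (i <= N)%N ->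
  tcoef i (in_qpoly _ p) = p`_i.
Proof.
move=> iN; rewrite /tcoef /= mk_monic_tseries -Pdiv.RingMonic.take_poly_rmodp.
by rewrite coef_take_poly ltnS iN.
Qed.

Lemma size_mk_monic_tseries : size (mk_monic ('X^(N.+1) : {poly R})) = N.+2.
Proof. by rewrite mk_monic_tseries size_polyXn. Qed.

Lemma tcoef_overflow i a : (N < i)%N -> tcoef i a = 0.
Proof.
move=> Ni; apply: nth_default; apply: leq_trans Ni.
by rewrite -ltnS -size_mk_monic_tseries size_mk_monic.
Qed.

Lemma tseriesP a b : (forall i, (i <= N)%N -> tcoef i a = tcoef i b) -> a = b.
Proof.
move=> eq_ab; apply: val_inj; apply/polyP => i.
by case: (leqP i N) => [/eq_ab | Ni] //; rewrite -!/(tcoef i _) !tcoef_overflow.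
Qed.

Lemma tcoefD i a b : tcoef i (a + b) = tcoef i a + tcoef i b.
Proof. by rewrite /tcoef poly_of_qpolyD coefD. Qed.

Lemma tcoefB i a b : tcoef i (a - b) = tcoef i a - tcoef i b.
Proof. by rewrite tcoefD /tcoef /= coefN. Qed.

Lemma tcoef_sum i I (r : seq I) (P : pred I) (F : I -> tseries) :
  tcoef i (\sum_(j <- r | P j) F j) = \sum_(j <- r | P j) tcoef i (F j).
Proof. by rewrite /tcoef poly_of_qpoly_sum coef_sum. Qed.

Lemma tcoefM i a b : (i <= N)%N ->
  tcoef i (a * b) = \sum_(j < i.+1) tcoef j a * tcoef (i - j) b.
Proof.
move=> iN; rewrite /tcoef poly_of_qpolyM [X in Pdiv.CommonRing.rmodp _ X]mk_monic_tseries.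
by rewrite -Pdiv.RingMonic.take_poly_rmodp coef_take_poly ltnS iN coefM.
Qed.

Lemma tcoefC i r : tcoef i (tsC r) = if i == 0%N then r else 0.
Proof. by rewrite /tcoef /tsC qpolyCE coefC. Qed.

Lemma tcoef1 i : tcoef i 1 = (i == 0%N)%:R.
Proof. by rewrite -(rmorph1 (qpolyC _)) -/(tsC 1) tcoefC; case: eqP. Qed.

Lemma tcoefCM i r a : tcoef i (tsC r * a) = r * tcoef i a.
Proof.
case: (leqP i N) => [iN | Ni]; last by rewrite !tcoef_overflow ?mulr0.
rewrite tcoefM // big_ord_recl tcoefC eqxx subn0 big1 ?addr0 // => j _.
by rewrite tcoefC mul0r.
Qed.

Lemma tcoefXM i a : (i <= N)%N ->
  tcoef i (tsX * a) = if i is i'.+1 then tcoef i' a else 0.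
Proof.
move=> iN; have tsXE j : (j <= i)%N -> tcoef j tsX = 'X`_j.
  by move=> ji; rewrite tcoef_in_qpoly // (leq_trans ji).
rewrite tcoefM // big_ord_recl tsXE // coefX mul0r add0r.
case: i iN tsXE => [|i] iN tsXE; first by rewrite big_ord0.
rewrite big_ord_recl tsXE // coefX mul1r subSS subn0 big1 ?addr0 // => j _.
by rewrite tsXE ?coefX ?mul0r // ltnS ltn_ord.
Qed.

Lemma tsCD r x : tsC (r + x) = tsC r + tsC x.
Proof. exact: rmorphD. Qed.

Lemma tsCM r x : tsC (r * x) = tsC r * tsC x.
Proof. exact: rmorphM. Qed.

Lemma tsC1 : tsC 1 = 1.
Proof. exact: rmorph1. Qed.

Lemma tsCVK r : r != 0 -> tsC r^-1 * tsC r = 1.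
Proof. by move=> r0; rewrite -tsCM mulVf // tsC1. Qed.

Definition invsubX r : tseries := in_qpoly _ (\poly_(i < N.+1) r^-1 ^+ i.+1).

Lemma tcoef_invsubX i r : (i <= N)%N -> tcoef i (invsubX r) = r^-1 ^+ i.+1.
Proof. by move=> iN; rewrite tcoef_in_qpoly // coef_poly ltnS iN. Qed.

Lemma invsubXK r : r != 0 -> (tsC r - tsX) * invsubX r = 1.
Proof.
move=> r0; apply: tseriesP => i iN.
rewrite mulrBl tcoefB tcoefCM tcoef1 tcoef_invsubX // tcoefXM //.
case: i iN => [|i] iN; first by rewrite expr1 mulfV // subr0.
by rewrite tcoef_invsubX 1?ltnW // exprS mulrA mulfV // mul1r subrr.
Qed.

Lemma invsubX_expSK k r : r != 0 ->
  (tsC r - tsX) * invsubX r ^+ k.+1 = invsubX r ^+ k.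
Proof. by move=> r0; rewrite [invsubX r ^+ k.+1]exprS mulrA invsubXK // mul1r. Qed.

Lemma tcoef_invsubX_exp r j s : 0 < r -> (s <= N)%N ->
  tcoef s (invsubX r ^+ j.+1) = 'C(j + s, s)%:R / r ^+ (j + s).+1.
Proof.
move=> r_gt0; have r0 : r != 0 by rewrite gt_eqF.
elim: j s => [|j IHj] s sN; first by rewrite expr1 tcoef_invsubX // binn div1r exprVn.
have rec t : (t <= N)%N -> r * tcoef t (invsubX r ^+ j.+2) =
    tcoef t (invsubX r ^+ j.+1) + if t is t'.+1 then tcoef t' (invsubX r ^+ j.+2) else 0.
  move=> tN; rewrite -(invsubX_expSK j.+1 r r0) mulrBl tcoefB tcoefCM tcoefXM //.
  by case: t tN => [|t] tN; rewrite ?subr0 ?addr0 ?subrK.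
elim: s sN => [|s IHs] sN; apply: (mulfI r0); rewrite rec // IHj //.
  by rewrite !addn0 !bin0 addr0 [r ^+ j.+2]exprS; field; rewrite expf_neq0.
rewrite IHs ?(ltnW sN) // !addnS !addSn [in RHS]binS natrD [r ^+ (j + s).+3]exprS.
by field; rewrite expf_neq0.
Qed.

Definition tnneg a := forall i, 0 <= tcoef i a.
Definition tle a b := tnneg (b - a).

Lemma tnneg0 : tnneg 0.
Proof. by move=> i; rewrite /tcoef coef0. Qed.

Lemma tnneg1 : tnneg 1.
Proof. by move=> i; rewrite tcoef1 ler0n. Qed.

Lemma tnnegC r : 0 <= r -> tnneg (tsC r).
Proof. by move=> r0 i; rewrite tcoefC; case: eqP. Qed.

Lemma tnnegD a b : tnneg a -> tnneg b -> tnneg (a + b).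
Proof. by move=> a0 b0 i; rewrite tcoefD addr_ge0. Qed.

Lemma tnnegM a b : tnneg a -> tnneg b -> tnneg (a * b).
Proof.
move=> a0 b0 i; case: (leqP i N) => [iN | Ni]; last by rewrite tcoef_overflow.
by rewrite tcoefM // sumr_ge0 // => j _; rewrite mulr_ge0.
Qed.

Lemma tnneg_sum I (r : seq I) (P : pred I) (F : I -> tseries) :
  (forall j, P j -> tnneg (F j)) -> tnneg (\sum_(j <- r | P j) F j).
Proof. by move=> F0; elim/big_ind: _ => //; [exact: tnneg0 | exact: tnnegD]. Qed.

Lemma tnneg_prod I (r : seq I) (P : pred I) (F : I -> tseries) :
  (forall j, P j -> tnneg (F j)) -> tnneg (\prod_(j <- r | P j) F j).
Proof. by move=> F0; elim/big_ind: _ => //; [exact: tnneg1 | exact: tnnegM]. Qed.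

Lemma tnnegX a k : tnneg a -> tnneg (a ^+ k).
Proof.
by move=> a0; elim: k => [|k IHk]; [exact: tnneg1 | rewrite [a ^+ _]exprS; exact: tnnegM].
Qed.

Lemma tnneg_invsubX r : 0 <= r -> tnneg (invsubX r).
Proof.
move=> r0 i; case: (leqP i N) => [iN | Ni]; last by rewrite tcoef_overflow.
by rewrite tcoef_invsubX // exprn_ge0 // invr_ge0.
Qed.

Lemma tle_tcoef i a b : tle a b -> tcoef i a <= tcoef i b.
Proof. by move=> /(_ i); rewrite tcoefB subr_ge0. Qed.

Lemma tle_refl a : tle a a.
Proof. by rewrite /tle subrr; exact: tnneg0. Qed.

Lemma tle_trans a b c : tle a b -> tle b c -> tle a c.
Proof. by move=> ab bc; rewrite /tle -(subrKA b); exact: tnnegD. Qed.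

Lemma tleD a b c d : tle a b -> tle c d -> tle (a + c) (b + d).
Proof. by move=> ab cd; rewrite /tle opprD addrACA; exact: tnnegD. Qed.

Lemma tleM a b c d : tnneg a -> tnneg c -> tle a b -> tle c d -> tle (a * c) (b * d).
Proof.
move=> a0 c0 ab cd; rewrite /tle.
have -> : b * d - a * c = (b - a) * (c + (d - c)) + a * (d - c) by ring.
by apply: tnnegD; apply: tnnegM => //; exact: tnnegD.
Qed.

Lemma tle_sum I (r : seq I) (P : pred I) (F G : I -> tseries) :
  (forall j, P j -> tle (F j) (G j)) ->
  tle (\sum_(j <- r | P j) F j) (\sum_(j <- r | P j) G j).
Proof.
by move=> FG; elim/big_ind2: _ => //; [exact: tle_refl | move=> *; exact: tleD].
Qed.

Lemma tle_prod I (r : seq I) (P : pred I) (F G : I -> tseries) :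
  (forall j, P j -> tnneg (F j)) -> (forall j, P j -> tle (F j) (G j)) ->
  tle (\prod_(j <- r | P j) F j) (\prod_(j <- r | P j) G j).
Proof.
move=> F0 FG; elim: r => [|j r IHr]; first by rewrite !big_nil; exact: tle_refl.
rewrite !big_cons; case: ifP => Pj //.
by apply: tleM => //; [exact: F0 | exact: tnneg_prod | exact: FG].
Qed.

Lemma tleX a b k : tnneg a -> tle a b -> tle (a ^+ k) (b ^+ k).
Proof.
move=> a0 ab; elim: k => [|k IHk]; first exact: tle_refl.
by rewrite [a ^+ _]exprS [b ^+ _]exprS; apply: tleM => //; exact: tnnegX.
Qed.

Lemma tle_invsubX r x : 0 < x -> x <= r -> tle (invsubX r) (invsubX x).
Proof.
move=> x0 xr i; case: (leqP i N) => [iN | Ni]; last by rewrite tcoef_overflow.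
have r0 : 0 < r := lt_le_trans x0 xr.
rewrite tcoefB !tcoef_invsubX // subr_ge0 lerXn2r ?nnegrE ?invr_ge0 ?(ltW x0) ?(ltW r0) //.
by rewrite lef_pV2.
Qed.

Lemma tle_invsubX1 r : 1 <= r -> tle (invsubX r) (tsC r^-1 * invsubX 1).
Proof.
move=> r1 i; case: (leqP i N) => [iN | Ni]; last by rewrite tcoef_overflow.
have r0 : 0 < r := lt_le_trans ltr01 r1.
rewrite tcoefB tcoefCM !tcoef_invsubX // invr1 expr1n mulr1 subr_ge0 exprS.
rewrite ler_piMr ?invr_ge0 ?(ltW r0) // exprn_ile1 ?invr_ge0 ?(ltW r0) //.
by rewrite invf_le1.
Qed.

Definition ipoch (m k : nat) : tseries := \prod_(j < k) invsubX (m + j)%:R.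

Lemma ipoch0 m : ipoch m 0 = 1.
Proof. by rewrite /ipoch big_ord0. Qed.

Lemma ipochS m k : ipoch m k.+1 = ipoch m k * invsubX (m + k)%:R.
Proof. by rewrite /ipoch big_ord_recr. Qed.

Lemma ipochSl m k : ipoch m k.+1 = invsubX m%:R * ipoch m.+1 k.
Proof.
by rewrite /ipoch big_ord_recl addn0; congr (_ * _); apply: eq_bigr => j _; rewrite addSnnS.
Qed.

Lemma tnneg_ipoch m k : tnneg (ipoch m k).
Proof. by apply: tnneg_prod => j _; apply: tnneg_invsubX. Qed.

Lemma ipochSK m k : (0 < m + k)%N -> ipoch m k.+1 * (tsC (m + k)%:R - tsX) = ipoch m k.
Proof.
by move=> mk; rewrite ipochS -mulrA [invsubX _ * _]mulrC invsubXK ?mulr1 // pnatr_eq0 -lt0n.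
Qed.

Lemma ipochSlK m k : (0 < m)%N -> ipoch m k.+1 * (tsC m%:R - tsX) = ipoch m.+1 k.
Proof.
by move=> m0; rewrite ipochSl mulrC mulrA invsubXK ?mul1r // pnatr_eq0 -lt0n.
Qed.

Lemma ipoch_partial_fraction m k : (0 < m)%N ->
  ipoch m k - ipoch m.+1 k = tsC k%:R * ipoch m k.+1.
Proof.
move=> m0; rewrite -ipochSlK // -ipochSK ?addn_gt0 ?m0 // natrD tsCD; ring.
Qed.

Lemma ipoch_telescope k M :
  \sum_(i < M) tsC k%:R * ipoch i.+1 k.+1 = ipoch 1 k - ipoch M.+1 k.
Proof.
elim: M => [|M IHM]; first by rewrite big_ord0 subrr.
by rewrite big_ord_recr /= IHM -ipoch_partial_fraction // addrA subrK.
Qed.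

Lemma fact_ipoch1_rec k : tsC k`!%:R * ipoch 1 k =
  1 + tsX * \sum_(l < k) tsC l.+1%:R^-1 * (tsC l.+1`!%:R * ipoch 1 l.+1).
Proof.
elim: k => [|k IHk]; first by rewrite big_ord0 mulr0 addr0 ipoch0 mulr1 tsC1.
rewrite big_ord_recr /= mulrDr addrA -IHk.
rewrite -[ipoch 1 k](ipochSK 1 k) // add1n factS natrM tsCM.
rewrite [tsC k.+1%:R^-1 * _]mulrA [tsC k.+1%:R^-1 * _]mulrA tsCVK ?pnatr_eq0 // mul1r.
ring.
Qed.

End TruncatedSeries.
Arguments tseries : clear implicits.

Section NestedSums.
Context {R : realType}.

Lemma Estr_ge0 p K : 0 <= Estr R p K.
Proof.
elim: p K => [|p IHp] K /=; first exact: ler01.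
by apply: sumr_ge0 => j _; rewrite divr_ge0.
Qed.

Lemma Hweak_ge0 q K : 0 <= Hweak R q K.
Proof.
elim: q K => [|q IHq] K /=; first exact: ler01.
by apply: sumr_ge0 => j _; rewrite divr_ge0.
Qed.

Lemma EstrS0 p : Estr R p.+1 0 = 0.
Proof. by rewrite /= big_geq. Qed.

Lemma EstrSS p K : Estr R p.+1 K.+1 = Estr R p.+1 K + Estr R p K / K.+1%:R.
Proof. by rewrite /= big_nat_recr. Qed.

Lemma Estr_leS p K : Estr R p K <= Estr R p K.+1.
Proof. by case: p => [|p] //; rewrite EstrSS lerDl divr_ge0 ?Estr_ge0. Qed.

Lemma Hweak_leS q K : Hweak R q K <= Hweak R q K.+1.
Proof.
by case: q => [|q] //=; rewrite [leRHS]big_nat_recr //= lerDl divr_ge0 ?Hweak_ge0.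
Qed.

End NestedSums.

Section SeriesCoefficients.
Context {R : realType} {N : nat}.
Local Notation tseries := (tseries R N).
Local Notation tcoef := (@tcoef R N).
Local Notation tsC := (@tsC R N).
Local Notation tsX := (@tsX R N).
Local Notation invsubX := (@invsubX R N).
Local Notation ipoch := (@ipoch R N).

Lemma tcoef_fact_ipoch1 s k : (s <= N)%N -> tcoef s (tsC k`!%:R * ipoch 1 k) = Hweak R s k.
Proof.
elim: s k => [|s IHs] k sN; rewrite fact_ipoch1_rec tcoefD tcoef1 tcoefXM //= ?addr0 //.
rewrite add0r tcoef_sum big_add1 /= big_mkord; apply: eq_bigr => l _.
by rewrite tcoefCM IHs ?(ltnW sN) // mulrC.
Qed.

Lemma tcoef_ipoch1 s k : (s <= N)%N -> tcoef s (ipoch 1 k) = Hweak R s k / k`!%:R.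
Proof.
by move=> sN; rewrite -tcoef_fact_ipoch1 // tcoefCM [X in _ = X / _]mulrC mulfK.
Qed.

Definition estr_sum (m p K : nat) : tseries :=
  \sum_(i < p.+1) tsC (Estr R i K) * invsubX m%:R ^+ (p - i).+1.

Definition expansion_rem (m p K : nat) : tseries :=
  tsC K`!%:R * ipoch m K.+1 * estr_sum m p K.

Lemma estr_sumS m p K : (0 < m)%N ->
  estr_sum m p K.+1 = estr_sum m p K +
    tsC K.+1%:R^-1 * ((tsC m%:R - tsX) * estr_sum m p K - tsC (Estr R p K)).
Proof.
move=> m0; have m0' : m%:R != 0 :> R by rewrite pnatr_eq0 -lt0n.
have -> : (tsC m%:R - tsX) * estr_sum m p K =
    \sum_(i < p) tsC (Estr R i K) * invsubX m%:R ^+ (p - i) + tsC (Estr R p K).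
  rewrite mulr_sumr big_ord_recr /= subnn mulrCA invsubX_expSK // expr0 mulr1.
  by congr (_ + _); apply: eq_bigr => i _; rewrite mulrCA invsubX_expSK.
rewrite addrK /estr_sum [in LHS]big_ord_recl [in RHS]big_ord_recl -addrA mulr_sumr -big_split.
congr (_ + _); apply: eq_bigr => i _; rewrite lift0 EstrSS tsCD mulrDl.
by rewrite /= subnSK // tsCM; congr (_ + _); ring.
Qed.

Lemma expansion_remS m p K : (0 < m)%N ->
  expansion_rem m p K = tsC (Estr R p K * K`!%:R) * ipoch m K.+2 + expansion_rem m p K.+1.
Proof.
move=> m0; rewrite /expansion_rem estr_sumS // -[ipoch m K.+1](ipochSK m K.+1) ?addn_gt0 ?m0 //.
rewrite factS natrM !tsCM addnS -addSn natrD tsCD.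
set c := tsC K.+1%:R; set t := _ - tsC (Estr R p K).
have -> : c * tsC K`!%:R * ipoch m K.+2 * (estr_sum m p K + tsC K.+1%:R^-1 * t) =
    c * tsC K`!%:R * ipoch m K.+2 * estr_sum m p K +
    (tsC K.+1%:R^-1 * c) * (tsC K`!%:R * ipoch m K.+2 * t) by ring.
by rewrite tsCVK ?pnatr_eq0 // mul1r /t; ring.
Qed.

Lemma invsubX_expansion m p K : (0 < m)%N ->
  \sum_(j < K) tsC (Estr R p j * j`!%:R) * ipoch m j.+2 + expansion_rem m p K =
  invsubX m%:R ^+ p.+2.
Proof.
move=> m0; elim: K => [|K IHK]; last by rewrite big_ord_recr -addrA -expansion_remS.
rewrite big_ord0 add0r /expansion_rem /estr_sum big_ord_recl big1 => [|i _]; last first.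
  by rewrite lift0 EstrS0 /tsC rmorph0 mul0r.
by rewrite addr0 /= tsC1 !mul1r subn0 ipochS ipoch0 mul1r addn0 -exprS.
Qed.

Lemma tnneg_estr_sum m p K : tnneg (estr_sum m p K).
Proof.
apply: tnneg_sum => i _; apply: tnnegM; first exact/tnnegC/Estr_ge0.
exact/tnnegX/tnneg_invsubX.
Qed.

Lemma tnneg_expansion_rem m p K : tnneg (expansion_rem m p K).
Proof.
apply: tnnegM; last exact: tnneg_estr_sum.
by apply: tnnegM; [exact: tnnegC | exact: tnneg_ipoch].
Qed.

Lemma tcoef_ipoch_row j M :
  j.+1%:R * \sum_(i < M) tcoef N (ipoch i.+1 j.+2) + tcoef N (ipoch M.+1 j.+1) =
  Hweak R N j.+1 / j.+1`!%:R.
Proof.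
have := congr1 (tcoef N) (ipoch_telescope j.+1 M).
rewrite tcoef_sum tcoefB tcoef_ipoch1 // => tel.
rewrite -(subrK (tcoef N (ipoch M.+1 j.+1)) (Hweak R N j.+1 / _)) -tel mulr_sumr.
by congr (_ + _); apply: eq_bigr => i _; rewrite tcoefCM.
Qed.

Lemma tcoef_ipoch_column m p K : (0 < m)%N ->
  \sum_(j < K) Estr R p j * j`!%:R * tcoef N (ipoch m j.+2) +
    tcoef N (expansion_rem m p K) =
  'C(p + N + 1, N)%:R / m%:R ^+ (p + N + 2).
Proof.
move=> m0; have := congr1 (tcoef N) (invsubX_expansion m p K m0).
rewrite tcoefD tcoef_sum tcoef_invsubX_exp ?ltr0n // addn1 addn2 addSn => <-.
by congr (_ + _); apply: eq_bigr => j _; rewrite tcoefCM.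
Qed.

Lemma tcoef_ipoch_le M k :
  tcoef N (ipoch M.+1 k.+1) <= M.+1%:R^-1 * tcoef N (ipoch 1 k.+1).
Proof.
rewrite !ipochSl -tcoefCM mulrA; apply: tle_tcoef; apply: tleM.
- exact: tnneg_invsubX.
- exact: tnneg_ipoch.
- by apply: tle_invsubX1; rewrite ler1n.
apply: tle_prod => [j _ | j _]; first exact: tnneg_invsubX.
by apply: tle_invsubX; rewrite ?ltr0n ?ler_nat ?leq_add2r.
Qed.

Definition expansion_majorant (p K : nat) : R :=
  \sum_(s < N.+1) Hweak R s K *
    \sum_(a < p.+1) Estr R a K * tcoef (N - s) (invsubX 1 ^+ (p - a).+2).

Lemma tle_expansion_rem m p K : (0 < m)%N -> tle (expansion_rem m p K)
    (tsC K.+1%:R^-1 * (tsC K`!%:R * ipoch 1 K * (invsubX 1 * estr_sum 1 p K))).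
Proof.
move=> m0; have iv0 r : 0 <= r -> tnneg (invsubX r) by exact: tnneg_invsubX.
have ipoch_le : tle (ipoch m K) (ipoch 1 K).
  apply: tle_prod => j _; first exact: iv0.
  by apply: tle_invsubX; rewrite ?ltr0n ?ler_nat ?leq_add2r.
have last_le : tle (invsubX (m + K)%:R) (tsC K.+1%:R^-1 * invsubX 1).
  apply: (@tle_trans _ _ _ (invsubX K.+1%:R)); last by apply: tle_invsubX1; rewrite ler1n.
  by apply: tle_invsubX; rewrite ?ltr0n // ler_nat -add1n leq_add2r.
have sum_le : tle (estr_sum m p K) (estr_sum 1 p K).
  apply: tle_sum => a _; apply: tleM; [exact/tnnegC/Estr_ge0 | exact/tnnegX/iv0 |
    exact: tle_refl | ].
  by apply: tleX; [exact: iv0 | apply: tle_invsubX; rewrite ?ltr0n ?ler1n].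
have -> : tsC K.+1%:R^-1 * (tsC K`!%:R * ipoch 1 K * (invsubX 1 * estr_sum 1 p K)) =
    tsC K`!%:R * (ipoch 1 K * (tsC K.+1%:R^-1 * invsubX 1)) * estr_sum 1 p K by ring.
rewrite /expansion_rem ipochS; apply: tleM => //.
- by apply: tnnegM; [exact: tnnegC | apply: tnnegM; [exact: tnneg_ipoch | exact: iv0]].
- exact: tnneg_estr_sum.
apply: tleM; [exact: tnnegC | apply: tnnegM; [exact: tnneg_ipoch | exact: iv0] |
  exact: tle_refl | ].
by apply: tleM => //; [exact: tnneg_ipoch | exact: iv0].
Qed.

Lemma tcoef_expansion_rem_le m p K : (0 < m)%N ->
  tcoef N (expansion_rem m p K) <= expansion_majorant p K / K.+1%:R.
Proof.
move=> m0; apply: le_trans (tle_tcoef N _ _ (tle_expansion_rem m p K m0)) _.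
rewrite tcoefCM tcoefM // mulrC; apply: ler_wpM2r; first by rewrite invr_ge0 ler0n.
apply: ler_sum => s _; rewrite tcoef_fact_ipoch1 -1?ltnS //.
apply: ler_wpM2l; first exact: Hweak_ge0.
rewrite /estr_sum mulr_sumr tcoef_sum; apply: ler_sum => a _.
by rewrite mulrCA -exprS tcoefCM.
Qed.

End SeriesCoefficients.

Section DoubleSeries.
Context {R : realType}.
Variables p q : nat.
Local Notation tcoef := (@tcoef R q).
Local Notation ipoch := (@ipoch R q).
Local Notation expansion_rem := (@expansion_rem R q).

Definition cell (i j : nat) : R := Estr R p j * j`!%:R * tcoef q (ipoch i.+1 j.+2).

Lemma cell_ge0 i j : 0 <= cell i j.
Proof. by rewrite !mulr_ge0 ?Estr_ge0 // tnneg_ipoch. Qed.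

Lemma cvg_series_cell_row j : series (cell^~ j) @ \oo --> Gterm R 0 p q j.+1.
Proof.
set c := Estr R p j * j`!%:R / j.+1%:R.
have rowE M : series (cell^~ j) M = Gterm R 0 p q j.+1 - c * tcoef q (ipoch M.+1 j.+1).
  have := @tcoef_ipoch_row R q j M.
  set S := \sum_(i < M) _; set r := tcoef q _ => row.
  have -> : series (cell^~ j) M = Estr R p j * j`!%:R * S.
    by rewrite seriesEord mulr_sumr.
  have -> : S = (Hweak R q j.+1 / j.+1`!%:R - r) / j.+1%:R.
    by rewrite -row addrK mulrC mulKf ?pnatr_eq0.
  rewrite /Gterm /c factS natrM; field.
  by rewrite -[1]/(1%:R) -natrD !pnatr_eq0 -!lt0n fact_gt0.
rewrite (funext rowE) -[X in _ --> X]subr0; apply: cvgB; first exact: cvg_cst.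
rewrite -(mulr0 c); apply: cvgMr.
apply: (@squeeze_cvgr _ _ _ _ (cst 0) (fun M => harmonic M * tcoef q (ipoch 1 j.+1))).
- by apply: nearW => M; rewrite /= tnneg_ipoch tcoef_ipoch_le.
- exact: cvg_cst.
by rewrite -(mul0r (tcoef q (ipoch 1 j.+1))); apply: cvgMl; exact: cvg_harmonic.
Qed.

Local Notation w := (p + q + 2)%N.
Local Notation binom := ('C(p + q + 1, q)%:R : R).

Lemma sum_cell_column i K :
  \sum_(0 <= j < K) cell i j + tcoef q (expansion_rem i.+1 p K) = binom / i.+1%:R ^+ w.
Proof. by rewrite big_mkord; exact: tcoef_ipoch_column. Qed.

Lemma nneseries_Gterm_cells : (\sum_(j <oo) (Gterm R 0 p q j.+1)%:E =
  \sum_(i <oo) \sum_(j <oo) (cell i j)%:E)%E.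
Proof.
have rowE j : (Gterm R 0 p q j.+1)%:E = (\sum_(i <oo) (cell i j)%:E)%E.
  have cvj := cvg_series_cell_row j.
  by rewrite nneseries_EFin ?(cvg_lim _ cvj) //; apply/cvg_ex; exists (Gterm R 0 p q j.+1).
rewrite (eq_eseriesr (fun j _ => rowE j)) nneseries_interchange // => i j.
by rewrite lee_fin cell_ge0.
Qed.

Lemma nneseries_Gterm_le :
  (\sum_(j <oo) (Gterm R 0 p q j.+1)%:E <= \sum_(i <oo) (binom / i.+1%:R ^+ w)%:E)%E.
Proof.
rewrite nneseries_Gterm_cells; apply: lee_nneseries => [i _ _ | i _].
  by apply: nneseries_ge0 => j _ _; rewrite lee_fin cell_ge0.
apply: lime_le; first by apply: is_cvg_nneseries => j _ _; rewrite lee_fin cell_ge0.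
apply: nearW => K; rewrite sumEFin lee_fin -(sum_cell_column i K) lerDl.
exact: tnneg_expansion_rem.
Qed.

End DoubleSeries.

Section ClosedForm.
Context {R : realType}.

Lemma Gterm_ge0 n p q k : 0 <= Gterm R n p q k.
Proof. by rewrite /Gterm divr_ge0 ?mulr_ge0 ?exprn_ge0 ?Estr_ge0 ?Hweak_ge0. Qed.

Lemma zetaE w : (2 <= w)%N -> zeta R w = limn (series (fun i => 1 / i.+1%:R ^+ w : R)).
Proof. by move=> w2; apply: cvg_lim => //; exact/cvg_sum1/is_cvg_series_inv_pow. Qed.

Lemma nneseries_binom_inv_pow p q :
  (\sum_(i <oo) ('C(p + q + 1, q)%:R / i.+1%:R ^+ (p + q + 2) : R)%:E =
   ('C(p + q + 1, q)%:R * zeta R (p + q + 2))%:E)%E.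
Proof.
have w2 : (2 <= p + q + 2)%N by rewrite leq_addl.
have termE i : (('C(p + q + 1, q)%:R / i.+1%:R ^+ (p + q + 2))%:E =
    'C(p + q + 1, q)%:R%:E * (1 / i.+1%:R ^+ (p + q + 2) : R)%:E)%E.
  by rewrite -EFinM mul1r.
rewrite (eq_eseriesr (fun i _ => termE i)).
rewrite nneseriesZl => [|i _]; last by rewrite lee_fin divr_ge0 ?exprn_ge0.
by rewrite nneseries_EFin ?zetaE //; exact: is_cvg_series_inv_pow.
Qed.

Lemma is_cvg_series_Gterm p q : cvgn (series (fun j => Gterm R 0 p q j.+1)).
Proof.
apply: nnseries_is_cvg => [j|]; first exact: Gterm_ge0.
by rewrite (le_lt_trans (nneseries_Gterm_le p q)) // nneseries_binom_inv_pow ltry.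
Qed.

End ClosedForm.

Section Remainder.
Context {R : realType}.
Variables p q : nat.
Local Notation tcoef := (@tcoef R q).
Local Notation invsubX := (@invsubX R q).
Local Notation majorant := (@expansion_majorant R q p).

Let gamma (a s : nat) : R := tcoef (q - s) (invsubX 1 ^+ (p - a).+2).

Let gamma_ge0 a s : 0 <= gamma a s.
Proof. exact/tnnegX/tnneg_invsubX. Qed.

Lemma expansion_majorant_ge0 K : 0 <= majorant K.
Proof.
apply: sumr_ge0 => s _; rewrite mulr_ge0 ?Hweak_ge0 // sumr_ge0 // => a _.
by rewrite mulr_ge0 ?Estr_ge0 ?gamma_ge0.
Qed.

Lemma expansion_majorant_nondecreasing : nondecreasing_seq majorant.
Proof.
apply/nondecreasing_seqP => K; apply: ler_sum => s _.
apply: ler_pM; rewrite ?Hweak_ge0 ?Hweak_leS //.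
  by rewrite sumr_ge0 // => a _; rewrite mulr_ge0 ?Estr_ge0 ?gamma_ge0.
by apply: ler_sum => a _; rewrite ler_wpM2r ?gamma_ge0 ?Estr_leS.
Qed.

Lemma is_cvg_series_majorant : cvgn (series (fun K => majorant K / K.+1%:R ^+ 2)).
Proof.
apply: (series_le_cvg
  (v_ := fun K => \sum_(s < q.+1) \sum_(a < p.+1) gamma a s * Gterm R 0 a s K.+1)).
- by move=> K; rewrite divr_ge0 ?exprn_ge0 ?expansion_majorant_ge0.
- by move=> K; rewrite !sumr_ge0 // => s _; rewrite sumr_ge0 // => a _;
    rewrite mulr_ge0 ?gamma_ge0 ?Gterm_ge0.
- move=> K; rewrite mulr_suml; apply: ler_sum => s _.
  rewrite mulr_sumr mulr_suml; apply: ler_sum => a _.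
  rewrite /Gterm /= add0n.
  set x := K.+1%:R ^+ 2; rewrite -/(gamma a s).
  have -> : Hweak R s K * (Estr R a K * gamma a s) / x =
    gamma a s * Estr R a K / x * Hweak R s K by ring.
  have -> : gamma a s * (Estr R a K * Hweak R s K.+1 / x) =
    gamma a s * Estr R a K / x * Hweak R s K.+1 by ring.
  by rewrite ler_wpM2l ?Hweak_leS // !mulr_ge0 ?gamma_ge0 ?Estr_ge0 ?invr_ge0 ?exprn_ge0.
apply: is_cvg_series_sum => s _; apply: is_cvg_series_sum => a _.
rewrite (_ : (fun K => _) = gamma a s *: (fun K => Gterm R 0 a s K.+1)) //.
exact/is_cvg_seriesZ/is_cvg_series_Gterm.
Qed.

Lemma cvg_tcoef_expansion_rem m : (0 < m)%N ->
  tcoef q (@expansion_rem R q m p K) @[K --> \oo] --> 0.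
Proof.
move=> m0; apply: (@squeeze_cvgr _ _ _ _ (cst 0) (fun K => majorant K / K.+1%:R)).
- by apply: nearW => K /=; rewrite tnneg_expansion_rem tcoef_expansion_rem_le.
- exact: cvg_cst.
apply: cvg_div_of_summable_div_sqr; first exact: expansion_majorant_nondecreasing.
  exact: expansion_majorant_ge0.
exact: is_cvg_series_majorant.
Qed.

End Remainder.

Section ClosedFormEquality.
Context {R : realType}.
Variables p q : nat.

Lemma cvg_series_cell_column i :
  series (@cell R p q i) @ \oo --> ('C(p + q + 1, q)%:R / i.+1%:R ^+ (p + q + 2) : R).
Proof.
have colE K : series (cell p q i) K =
    'C(p + q + 1, q)%:R / i.+1%:R ^+ (p + q + 2) - tcoef q (@expansion_rem R q i.+1 p K).
  by rewrite -(sum_cell_column p q i K) addrK.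
rewrite (funext colE) -[X in _ --> X]subr0; apply: cvgB; first exact: cvg_cst.
exact: cvg_tcoef_expansion_rem.
Qed.

Lemma nneseries_Gterm : (\sum_(j <oo) (Gterm R 0 p q j.+1)%:E =
  ('C(p + q + 1, q)%:R * zeta R (p + q + 2))%:E)%E.
Proof.
rewrite nneseries_Gterm_cells -nneseries_binom_inv_pow; apply: eq_eseriesr => i _.
have cvi := cvg_series_cell_column i.
by rewrite nneseries_EFin ?(cvg_lim _ cvi) //; apply/cvg_ex; eexists; exact: cvi.
Qed.

Lemma cvg_Gpartial : Gpartial R 0 p q @ \oo --> 'C(p + q + 1, q)%:R * zeta R (p + q + 2).
Proof.
have cvG := is_cvg_series_Gterm (R := R) p q.
have := nneseries_EFin _ cvG; rewrite nneseries_Gterm => -[->].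
exact: cvg_sum1.
Qed.

End ClosedFormEquality.

Theorem proposition2p5 (R : realType) (p q : nat) :
  cvgn (Gpartial R 0 p q) /\
  G R 0 p q = ('C(p + q + 1, q))%:R * zeta R (p + q + 2) /\
  ((0 < q)%N -> G R 0 p q = G R 0 q.-1 p.+1).
Proof.
have GE a b : G R 0 a b = 'C(a + b + 1, b)%:R * zeta R (a + b + 2).
  by apply: cvg_lim; [exact: Rhausdorff | exact: cvg_Gpartial].
split; first by apply/cvg_ex; eexists; exact: cvg_Gpartial.
split; first exact: GE.
case: q => [|q] // _; rewrite !GE /=.
have -> : (q + p.+1 + 2 = p + q.+1 + 2)%N by lia.
congr (_%:R * _); rewrite -bin_sub; first congr 'C(_, _); lia.
Qed.
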